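(* Let $(G,\prec)$ be an $\mathcal{H}$-free ordered graph and let $V[x,y]$ be a valid segment. Then the set $S(x,y)\cup\{x,y\}$ induces a capped ordered subgraph of $(G,\prec)$.
   Context: An ordered graph is a pair $(G,\prec)$ with $G$ a finite graph and $\prec$ a linear order on $V(G)$; induced subgraphs carry the restricted order. It is capped if for any $a\prec b\prec c\prec d$ with $ac,bd\in E(G)$ we have $ad\in E(G)$. For $a\prec b\prec c\prec d$ with $ac,bd\in E(G)$, $ac$ crosses $bd$. A rotation of $\prec$ is any order obtained by repeatedly making the largest element the smallest. For $u\prec v$, a crossing sequence from $u$ to $v$ is a sequence of distinct edges $e_1,\dots,e_k$ with $u$ the smaller end of $e_1$, $v$ the larger end of $e_k$, and $e_i$ crossing $e_{i+1}$ for $1\le i<k$; if $v\prec u$, a crossing sequence from $u$ to $v$ is one with respect to any rotation $\prec'$ of $\prec$ with $u\prec'v$. $\mathcal{H}$ is the family of ordered graphs containing two non-adjacent vertices $u,v$ with a crossing sequence from $u$ to $v$ and one from $v$ to $u$; $\mathcal{H}$-free means no induced ordered subgraph lies in $\mathcal{H}$. For $x\prec y$, the segment $V[x,y]$ is the set of vertices $v$ with $x\preceq v\preceq y$; similarly $V[x,y)$, $V(x,y]$, $V(x,y)$ denote the half-open and open versions. $V[x,y]$ is valid if there is a crossing sequence from $y$ to $x$. A vertex $v$ is left-reachable from $V[x,y]$ if $v\in V[x,y)$ and there is a crossing sequence from $y$ to $v$; right-reachable if $v\in V(x,y]$ and there is a crossing sequence from $v$ to $x$; $S(x,y)$ denotes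 the set of vertices that are both left- and right-reachable from $V[x,y]$. *)

From mathcomp Require Import all_boot.
Set Implicit Arguments.
Unset Strict Implicit.
Unset Printing Implicit Defensive.

(* An ordered graph: a finite type T of vertices, a symmetric irreflexive
   adjacency relation E, and a strict linear order r (r x y means x ≺ y).
   Induced ordered subgraphs are given by a vertex set W : {set T}; all
   notions below are relative to W, with edges and order restricted to W. *)

Section OrderedGraphs.
Variable T : finType.

Definition strict_linear_order (r : rel T) : Prop :=
  [/\ irreflexive r, transitive r & forall x y, x != y -> r x y || r y x].

Definition is_max (W : {set T}) (r : rel T) (z : T) : bool :=
  (z \in W) && [forall w in W, ~~ r z w].

(* one rotation step (on W): the largest element becomes the smallest *)
Definition rot_step (W : {set T}) (r : rel T) : rel T :=
  fun x y => if is_max W r y then false else if is_max W r x then true else r x y.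

Definition rotation (W : {set T}) (r : rel T) (k : nat) : rel T :=
  iter k (rot_step W) r.

Definition is_edge (W : {set T}) (E : rel T) (r : rel T) (e : T * T) : bool :=
  [&& e.1 \in W, e.2 \in W, E e.1 e.2 & r e.1 e.2].

Definition crosses (r : rel T) (e f : T * T) : bool :=
  [&& r e.1 f.1, r f.1 e.2 & r e.2 f.2].

Definition crossing_seq (W : {set T}) (E : rel T) (r : rel T) (u v : T)
    (s : seq (T * T)) : bool :=
  if s is e :: s' then
    [&& uniq s, all (is_edge W E r) s, e.1 == u, (last e s').2 == v
      & path (crosses r) e s']
  else false.

Definition has_cs (W : {set T}) (E : rel T) (r : rel T) (u v : T) : Prop :=
  (r u v /\ exists s, crossing_seq W E r u v s) \/
  (r v u /\ exists k, rotation W r k u v /\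
            exists s, crossing_seq W E (rotation W r k) u v s).

Definition H_free (E : rel T) (r : rel T) : Prop :=
  forall (W : {set T}) (u v : T), u \in W -> v \in W -> ~~ E u v ->
    has_cs W E r u v -> has_cs W E r v u -> False.

Definition capped_on (E : rel T) (r : rel T) (P : T -> Prop) : Prop :=
  forall a b c d, P a -> P b -> P c -> P d ->
    r a b -> r b c -> r c d -> E a c -> E b d -> E a d.

Definition valid_segment (E : rel T) (r : rel T) (x y : T) : Prop :=
  has_cs [set: T] E r y x.

Definition left_reachable (E : rel T) (r : rel T) (x y v : T) : Prop :=
  (x = v \/ r x v) /\ r v y /\ has_cs [set: T] E r y v.

Definition right_reachable (E : rel T) (r : rel T) (x y v : T) : Prop :=
  r x v /\ (v = y \/ r v y) /\ has_cs [set: T] E r v x.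

Definition in_S (E : rel T) (r : rel T) (x y v : T) : Prop :=
  left_reachable E r x y v /\ right_reachable E r x y v.

End OrderedGraphs.

From mathcomp Require Import all_boot.
From Stdlib Require Import FunctionalExtensionality.

Set Implicit Arguments.
Unset Strict Implicit.
Unset Printing Implicit Defensive.

(* Suppose a ≺ b ≺ c ≺ d lie in S(x,y) ∪ {x,y} with ac, bd ∈ E but ad ∉ E.
   The edges ac, bd form a crossing sequence from a to d.  On the other
   hand d reaches x and y reaches a by crossing sequences (by membership in
   S(x,y), or by validity of V[x,y] when d = y or a = x).  The rotations of
   ≺ are exactly the orders that put an up-closed set U in front of its
   complement; both sequences stay crossing sequences in the rotation with
   U = {w | d ⪯ w}, where d ⪯ y ≺ x ⪯ a.  Crossing walks u → v and w → z
   with u ⪯ w ≺ v ⪯ z splice into one from u to z, so d also reaches a, and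
   the non-adjacent pair {a, d} contradicts H-freeness. *)

Definition le_of (T : eqType) (r : rel T) (a b : T) : bool := (a == b) || r a b.

Section StrictLinearOrder.
Variables (T : finType) (r : rel T).
Hypothesis r_lin : strict_linear_order r.

Lemma lt_irr a : r a a = false.
Proof. by case: r_lin => irr _ _; apply: irr. Qed.

Lemma lt_trans a b c : r a b -> r b c -> r a c.
Proof. by case: r_lin => _ tr _; apply: tr. Qed.

Lemma lt_asym a b : r a b -> r b a = false.
Proof. by move=> rab; apply/negbTE/negP => /(lt_trans rab); rewrite lt_irr. Qed.

Lemma le_refl a : le_of r a a.
Proof. by rewrite /le_of eqxx. Qed.

Lemma ltW a b : r a b -> le_of r a b.
Proof. by rewrite /le_of => ->; rewrite orbT. Qed.

Lemma lt_le_trans a b c : r a b -> le_of r b c -> r a c.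
Proof. by move=> rab /orP[/eqP<- // | /(lt_trans rab)]. Qed.

Lemma le_lt_trans a b c : le_of r a b -> r b c -> r a c.
Proof. by case/orP=> [/eqP-> // | /lt_trans]; apply. Qed.

Lemma le_trans a b c : le_of r a b -> le_of r b c -> le_of r a c.
Proof. by case/orP=> [/eqP-> // | rab] /(lt_le_trans rab)/ltW. Qed.

Lemma lt_leF a b : r a b -> le_of r b a = false.
Proof.
by move=> rab; rewrite /le_of lt_asym // orbF; apply: contraTF rab => /eqP->; rewrite lt_irr.
Qed.

Lemma nlt_le a b : ~~ r a b -> le_of r b a.
Proof.
case: r_lin => _ _ tot nrab; rewrite /le_of; case: (eqVneq b a) => //= nba.
by case/orP: (tot _ _ nba) => // rab; rewrite rab in nrab.
Qed.

Lemma converse_linear : strict_linear_order (fun a b => r b a).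
Proof.
case: r_lin => irr tr tot; split => // [b a c h1 h2 | a b nab].
- exact: tr h2 h1.
- by rewrite orbC; apply: tot.
Qed.

Lemma exists_max (A : {set T}) a0 : a0 \in A ->
  exists2 z, z \in A & forall w, w \in A -> w != z -> r w z.
Proof.
move=> Aa0; have [z Az zmax] := arg_maxnP (fun z => #|[set v in A | r v z]|) Aa0.
exists z => // w Aw nwz; case: r_lin => _ _ tot.
case/orP: (tot _ _ nwz) => // rzw.
suff lt_zw : #|[set v in A | r v z]| < #|[set v in A | r v w]|.
  by have := zmax w Aw; rewrite /= leqNgt lt_zw.
apply: proper_card; apply/properP; split.
  by apply/subsetP => v; rewrite !inE => /andP[-> /lt_trans->].
by exists z; rewrite !inE ?lt_irr ?andbF // rzw andbT; exact: Az.
Qed.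

End StrictLinearOrder.

Definition crossing_walk (T : finType) (W : {set T}) (E r : rel T) (u v : T)
    (s : seq (T * T)) : bool :=
  if s is e :: s' then
    [&& all (is_edge W E r) s, e.1 == u, (last e s').2 == v
      & path (crosses r) e s']
  else false.

Section CrossingWalks.
Variables (T : finType) (W : {set T}) (E r : rel T).
Local Notation walk := (crossing_walk W E r).

Lemma crossing_seq_walk u v s : crossing_seq W E r u v s -> walk u v s.
Proof. by case: s => [|e s] // /andP[_]. Qed.

Lemma crossing_walk_seq u v s : walk u v s -> exists s', crossing_seq W E r u v s'.
Proof.
case: s => [|e s] // /and4P[all_s eu ev pth]; move: ev.
case: (shortenP pth) => s' pth' uniq_s' sub_s' ev; exists (e :: s').
have all_s' : all (is_edge W E r) (e :: s').
  apply/allP=> f; rewrite inE => /predU1P[-> | /sub_s' f_s]; apply: (allP all_s).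
    exact: mem_head.
  by rewrite inE f_s orbT.
by rewrite /crossing_seq uniq_s' all_s' eu ev pth'.
Qed.

Lemma crossing_walk_join e R f Q u z :
  walk u (last e R).2 (e :: R) -> walk f.1 z (f :: Q) -> crosses r (last e R) f ->
  walk u z (e :: R ++ f :: Q).
Proof.
case/and4P=> HeR eu _ pR /and4P[HfQ _ fz pQ] cross.
by rewrite /crossing_walk -cat_cons all_cat HeR HfQ eu last_cat fz cat_path pR /= cross pQ.
Qed.

Hypothesis r_lin : strict_linear_order r.

Lemma crossing_path_bounds e s : path (crosses r) e s ->
  forall f, f \in e :: s -> le_of r e.1 f.1 /\ le_of r f.2 (last e s).2.
Proof.
elim: s e => [|e' s IH] e /=.
  by move=> _ f; rewrite inE => /eqP->; rewrite !le_refl.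
case/andP=> /and3P[r11 r12 r22] pth f; rewrite inE => /predU1P[-> | fs].
  split; first exact: le_refl.
  by have [_ /(lt_le_trans r_lin r22)/ltW] := IH e' pth e' (mem_head _ _).
have [le1 le2] := IH e' pth f fs; split=> //.
exact/ltW/(lt_le_trans r_lin r11 le1).
Qed.

Lemma crossing_walk_inside u v s : walk u v s -> forall f, f \in s ->
  [/\ le_of r u f.1, le_of r u f.2, le_of r f.1 v & le_of r f.2 v].
Proof.
case: s => [|e s] // /and4P[all_s /eqP<- /eqP<- pth] f fs.
have [le1 le2] := crossing_path_bounds pth fs.
have /and4P[_ _ _ rf] := allP all_s f fs.
split=> //; apply: ltW.
  exact: (le_lt_trans r_lin le1 rf).
exact: (lt_le_trans r_lin rf le2).
Qed.

Lemma crossing_walk_prefix e s u v w : walk u v (e :: s) -> r u w -> r w v ->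
  exists R, [/\ walk u (last e R).2 (e :: R), r (last e R).1 w,
               r w (last e R).2 & last e R \in e :: s].
Proof.
elim: s e u => [|e' s IH] e u.
  case/and4P=> He /eqP eu /eqP ev _ ruw rwv; subst u v.
  by exists [::]; split; rewrite ?mem_head // /crossing_walk He !eqxx.
rewrite /crossing_walk /=.
case/and4P=> /andP[He Hs] /eqP eu ev /andP[/and3P[r11 r12 r22] pth] ruw rwv.
subst u; have [rwe | /(nlt_le r_lin) lewe] := boolP (r w e.2).
  by exists [::]; split; rewrite ?mem_head //= He !eqxx.
have [||R [walkR r1 r2 inR]] := IH e' e'.1 _ _ rwv.
- by rewrite /crossing_walk /= Hs eqxx ev pth.
- exact: (lt_le_trans r_lin r12 lewe).
move: walkR; rewrite /crossing_walk /= => /and4P[HR _ eR pR].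
exists (e' :: R); split=> //; last by rewrite inE inR orbT.
by rewrite /crossing_walk /= He HR eqxx eR /crosses r11 r12 r22.
Qed.

Lemma crossing_walk_splice e R f Q u z :
  walk u (last e R).2 (e :: R) -> walk f.1 z (f :: Q) ->
  r (last e R).1 f.1 -> r f.1 (last e R).2 -> le_of r (last e R).2 z ->
  exists s, walk u z s.
Proof.
move=> walkR; elim: Q f => [|f' Q IH] f walkQ r1 r2 lez.
  have [r3 | nr3] := boolP (r (last e R).2 f.2).
    by exists (e :: R ++ [:: f]); apply: crossing_walk_join; rewrite ?/crosses ?r1 ?r2.
  case/and4P: walkQ => _ _ /eqP fz _; move: lez nr3; rewrite -fz.
  by case/orP=> [/eqP<- _ | ->]; first by exists (e :: R).
have [r3 | /(nlt_le r_lin) le3] := boolP (r (last e R).2 f.2).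
  by exists (e :: R ++ f :: f' :: Q); apply: crossing_walk_join; rewrite ?/crosses ?r1 ?r2.
case/and4P: walkQ => /andP[_ HQ] _ ez /andP[/and3P[c1 c2 _] pQ].
apply: (IH f') => //; first by rewrite /= HQ eqxx ez.
- exact: (lt_trans r_lin r1 c1).
- exact: (lt_le_trans r_lin c2 le3).
Qed.

Lemma crossing_walk_trans u v w z P Q : walk u v P -> walk w z Q ->
  le_of r u w -> r w v -> le_of r v z -> exists s, walk u z s.
Proof.
move=> walkP walkQ /orP[/eqP-> | ruw] rwv; first by exists Q.
case/orP=> [/eqP<- | rvz]; first by exists P.
case: P walkP => [|e P] // walkP; case: Q walkQ => [|f Q] // walkQ.
case/and4P: (walkQ) => _ /eqP wf _ _; subst w.
have [R [walkR r1 r2 inR]] := crossing_walk_prefix walkP ruw rwv.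
have [_ _ _ lev] := crossing_walk_inside walkP inR.
exact: (crossing_walk_splice walkR walkQ r1 r2 (ltW (le_lt_trans r_lin lev rvz))).
Qed.

End CrossingWalks.

Definition cut (T : finType) (r : rel T) (U : {set T}) : rel T := fun a b =>
  ((a \in U) && (b \notin U)) || (((a \in U) == (b \in U)) && r a b).

Definition upclosed (T : finType) (r : rel T) (U : {set T}) : Prop :=
  forall a b, a \in U -> r a b -> b \in U.

Lemma rotationS (T : finType) (W : {set T}) (r : rel T) k :
  rotation W r k.+1 = rot_step W (rotation W r k).
Proof. by []. Qed.

Section Cuts.
Variables (T : finType) (r : rel T).
Hypothesis r_lin : strict_linear_order r.

Lemma cut_linear U : strict_linear_order (cut r U).
Proof.
case: r_lin => irr tr tot; split.
- by move=> a; rewrite /cut irr andbN andbF.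
- move=> b a c; rewrite /cut.
  by case: (a \in U); case: (b \in U); case: (c \in U) => //=; apply: tr.
- by move=> a b nab; rewrite /cut; case: (a \in U); case: (b \in U) => //=; apply: tot.
Qed.

Lemma cut_set0 : cut r set0 = r.
Proof. by do 2!apply: functional_extensionality => ?; rewrite /cut !inE. Qed.

Lemma cut_setT : cut r [set: T] = r.
Proof. by do 2!apply: functional_extensionality => ?; rewrite /cut !inE. Qed.

Lemma upset_upclosed d : upclosed r [set w | le_of r d w].
Proof. by move=> a b; rewrite !inE => dla /(le_lt_trans r_lin dla)/ltW. Qed.

Lemma le_cut_same_side (U : {set T}) a b :
  (a \in U) = (b \in U) -> le_of r a b -> le_of (cut r U) a b.
Proof.
move=> same /orP[/eqP-> | rab]; first by rewrite /le_of eqxx.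
by rewrite /le_of /cut same eqxx rab !orbT.
Qed.

Section MaxOutside.
Variables (U : {set T}) (z : T).
Hypotheses (upU : upclosed r U) (zU : z \notin U).
Hypothesis zmax : forall w, w \notin U -> w != z -> r w z.

Lemma is_max_cut v : is_max [set: T] (cut r U) v = (v == z).
Proof.
rewrite /is_max in_setT /=; apply/forallP/eqP => [vmax | -> w].
  apply/eqP; apply: contraLR (vmax z) => nvz; rewrite in_setT /= /cut (negbTE zU) andbT.
  by case: (boolP (v \in U)) => //= vU; rewrite (zmax vU nvz).
rewrite in_setT /cut (negbTE zU) /=; case: (boolP (w \in U)) => //= wU.
by case: (eqVneq w z) => [-> | nwz]; rewrite ?(lt_irr r_lin) // (lt_asym r_lin (zmax wU nwz)).
Qed.

Lemma upclosed_setU1_max : upclosed r (z |: U).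
Proof.
move=> a b; rewrite !in_setU1 => /predU1P[-> | aU] rab; last by rewrite (upU aU rab) orbT.
case: (boolP (b \in U)) => [|bU]; first by rewrite orbT.
by case: (eqVneq b z) => // nbz; rewrite (lt_asym r_lin (zmax bU nbz)) in rab.
Qed.

Lemma rot_step_cut_max : rot_step [set: T] (cut r U) = cut r (z |: U).
Proof.
case: r_lin => _ _ tot.
apply: functional_extensionality => a; apply: functional_extensionality => b.
rewrite /rot_step !is_max_cut /cut !in_setU1.
case: (eqVneq b z) => [-> | nbz]; case: (eqVneq a z) => [-> | naz] //=.
- by rewrite (lt_irr r_lin).
- case: (boolP (a \in U)) => //= aU; apply/esym/negbTE/negP => raz.
  by move: zU; rewrite (upU aU raz).
- case: (boolP (b \in U)) => //= bU; apply/esym; case/orP: (tot _ _ nbz) => // rbz.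
  by move: zU; rewrite (upU bU rbz).
Qed.

End MaxOutside.

(* [t0] only witnesses that [T] is inhabited. *)
Lemma rot_step_cut (t0 : T) U : upclosed r U ->
  exists2 U', upclosed r U' & rot_step [set: T] (cut r U) = cut r U'.
Proof.
have nonfull V z0 : upclosed r V -> z0 \notin V ->
    exists2 U', upclosed r U' & rot_step [set: T] (cut r V) = cut r U'.
  move=> upV z0V; have z0V' : z0 \in ~: V by rewrite inE.
  have [z] := exists_max r_lin z0V'; rewrite inE => zV zmax.
  have zmax' w : w \notin V -> w != z -> r w z by move=> wV; apply: zmax; rewrite inE.
  by exists (z |: V); [apply: upclosed_setU1_max | apply: rot_step_cut_max].
move=> upU; have [z0 z0U | Ufull] := pickP (fun v => v \notin U).
  exact: nonfull z0U.
have -> : U = [set: T] by apply/setP => v; rewrite in_setT; apply/negbFE/Ufull.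
have up0 : upclosed r set0 by move=> a b; rewrite inE.
have t0_out : t0 \notin set0 by rewrite inE.
have [U' upU' rotU'] := nonfull _ _ up0 t0_out.
by exists U'; rewrite // cut_setT -rotU' cut_set0.
Qed.

Lemma rotation_is_cut (t0 : T) k :
  exists2 U, upclosed r U & rotation [set: T] r k = cut r U.
Proof.
elim: k => [|k [U upU rotU]]; last by rewrite rotationS rotU; apply: rot_step_cut.
by exists set0; [move=> a b; rewrite inE | rewrite cut_set0].
Qed.

Lemma cut_is_rotation U : upclosed r U -> exists k, rotation [set: T] r k = cut r U.
Proof.
case: (r_lin) => _ _ tot.
move Hn : #|U| => n; elim: n U Hn => [|n IH] U cardU upU.
  by exists 0; move/eqP: cardU; rewrite cards_eq0 => /eqP->; rewrite cut_set0.
have [z0 z0U] : exists z0, z0 \in U by apply/set0Pn; rewrite -card_gt0 cardU.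
have [z zU zmin] := exists_max (converse_linear r_lin) z0U.
have zU0 : z \notin U :\ z by rewrite in_setD1 eqxx.
have upU0 : upclosed r (U :\ z).
  move=> a b; rewrite !in_setD1 => /andP[naz aU] rab; rewrite (upU _ _ aU rab) andbT.
  by apply: contraTneq rab => ->; rewrite (lt_asym r_lin (zmin a aU naz)).
have zmax w : w \notin U :\ z -> w != z -> r w z.
  rewrite in_setD1 negb_and negbK => /predU1P[-> | wU]; first by rewrite eqxx.
  move=> nwz; case/orP: (tot _ _ nwz) => // rzw.
  by rewrite (upU _ _ zU rzw) in wU.
have [|k rotk] := IH (U :\ z) _ upU0.
  by move: cardU; rewrite (cardsD1 z U) zU add1n => -[].
by exists k.+1; rewrite rotationS rotk (rot_step_cut_max upU0 zU0 zmax) setD1K.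
Qed.

Lemma crossing_walk_cut_eq (W U1 U2 : {set T}) (E : rel T) u v s :
  {in s, forall f, (f.1 \in U1) = (f.1 \in U2) /\ (f.2 \in U1) = (f.2 \in U2)} ->
  crossing_walk W E (cut r U1) u v s = crossing_walk W E (cut r U2) u v s.
Proof.
have same_cut a b : (a \in U1) = (a \in U2) -> (b \in U1) = (b \in U2) ->
    cut r U1 a b = cut r U2 a b by rewrite /cut => -> ->.
case: s => [|e s] // agree; rewrite /crossing_walk.
rewrite (@eq_in_all _ _ (is_edge W E (cut r U2))); last first.
  by move=> f /agree[f1 f2]; rewrite /is_edge same_cut.
pose P := [pred f : T * T | ((f.1 \in U1) == (f.1 \in U2)) && ((f.2 \in U1) == (f.2 \in U2))].
have P_s : all P (e :: s) by apply/allP => f /agree[f1 f2]; rewrite /= f1 f2 !eqxx.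
rewrite (@eq_in_path _ P _ (crosses (cut r U2))) //.
by move=> f g /andP[/eqP f1 /eqP f2] /andP[/eqP g1 /eqP g2]; rewrite /crosses !same_cut.
Qed.

Lemma crossing_walk_recut (W U D : {set T}) (E : rel T) u v s :
  u \in U -> v \notin U -> crossing_walk W E (cut r U) u v s ->
  (forall w, le_of r u w -> w \in D) -> (forall w, le_of r w v -> w \notin D) ->
  crossing_walk W E (cut r D) u v s.
Proof.
move=> uU vU walk_s uD vD; rewrite -(@crossing_walk_cut_eq W U) //.
have same w : le_of (cut r U) u w -> le_of (cut r U) w v -> (w \in U) = (w \in D).
  case: (boolP (w \in U)) => wU uw wv.
    by apply/esym/uD; move: uw; rewrite /le_of /cut uU wU.
  by apply/esym/negbTE/vD; move: wv; rewrite /le_of /cut (negbTE vU) (negbTE wU).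
move=> f fs; have [uf1 uf2 f1v f2v] := crossing_walk_inside (cut_linear U) walk_s fs.
by rewrite (same _ uf1 f1v) (same _ uf2 f2v).
Qed.

End Cuts.

Section CrossingSequences.
Variables (T : finType) (E r : rel T).
Hypothesis r_lin : strict_linear_order r.

Lemma crossing_edges_has_cs a b c d :
  r a b -> r b c -> r c d -> E a c -> E b d -> has_cs [set: T] E r a d.
Proof.
move=> rab rbc rcd Eac Ebd.
have rac := lt_trans r_lin rab rbc; have rbd := lt_trans r_lin rbc rcd.
left; split; first exact: (lt_trans r_lin rac rcd).
have neq : (a, c) != (b, d) by apply: contraTneq rab => -[->]; rewrite (lt_irr r_lin).
exists [:: (a, c); (b, d)].
rewrite /crossing_seq /= inE neq /is_edge /crosses /= !in_setT.
by rewrite Eac Ebd rac rbd rab rbc rcd !eqxx.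
Qed.

Lemma has_cs_walk_cut u v (D : {set T}) : r v u -> has_cs [set: T] E r u v ->
  (forall w, le_of r u w -> w \in D) -> (forall w, le_of r w v -> w \notin D) ->
  exists s, crossing_walk [set: T] E (cut r D) u v s.
Proof.
move=> rvu [[ruv _] | [_ [k [rot_uv [s cs_s]]]]].
  by rewrite (lt_asym r_lin rvu) in ruv.
have [U _ rotU] := rotation_is_cut r_lin u k.
rewrite rotU in rot_uv cs_s.
have /andP[uU vU] : (u \in U) && (v \notin U).
  by move: rot_uv; rewrite /cut (lt_asym r_lin rvu) andbF orbF.
by exists s; apply: (crossing_walk_recut r_lin uU vU (crossing_seq_walk cs_s)).
Qed.

Lemma cut_walk_has_cs U u v s : upclosed r U -> u \in U -> v \notin U -> r v u ->
  crossing_walk [set: T] E (cut r U) u v s -> has_cs [set: T] E r u v.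
Proof.
move=> upU uU vU rvu /crossing_walk_seq[s' cs_s'].
have [k rotk] := cut_is_rotation r_lin upU.
by right; split=> //; exists k; rewrite rotk /cut uU vU; split=> //; exists s'.
Qed.

End CrossingSequences.

Definition in_S_or_end (T : finType) (E r : rel T) (x y v : T) : Prop :=
  in_S E r x y v \/ v = x \/ v = y.

Section SegmentEnds.
Variables (T : finType) (E r : rel T) (x y : T).
Hypotheses (r_lin : strict_linear_order r) (xy : r x y).

Lemma in_S_or_end_between v : in_S_or_end E r x y v -> le_of r x v /\ le_of r v y.
Proof.
case=> [[[xv [vy _]] _] | [-> | ->]].
- by split; [case: xv => [-> | /ltW //]; apply: le_refl | apply: ltW].
- by split; [apply: le_refl | apply: ltW].
- by split; [apply: ltW | apply: le_refl].
Qed.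

Hypothesis valid : valid_segment E r x y.

Lemma in_S_or_end_cs_to_x v : in_S_or_end E r x y v -> r x v -> has_cs [set: T] E r v x.
Proof. by case=> [[_ [_ [_ cs]]] | [-> | ->]] //; rewrite (lt_irr r_lin). Qed.

Lemma in_S_or_end_cs_from_y v : in_S_or_end E r x y v -> r v y -> has_cs [set: T] E r y v.
Proof. by case=> [[[_ [_ cs]] _] | [-> | ->]] //; rewrite (lt_irr r_lin). Qed.

End SegmentEnds.

Theorem lemma4p4 (T : finType) (E : rel T) (r : rel T)
  (E_sym : symmetric E) (E_irr : irreflexive E)
  (r_lin : strict_linear_order r)
  (Hfree : H_free E r)
  (x y : T) (xy : r x y) (Hvalid : valid_segment E r x y) :
  capped_on E r (fun v => in_S E r x y v \/ v = x \/ v = y).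
Proof.
move=> a b c d Pa _ _ Pd rab rbc rcd Eac Ebd; apply/idPn => nEad.
have rad : r a d := lt_trans r_lin (lt_trans r_lin rab rbc) rcd.
have [[xa _] [_ dy]] := (in_S_or_end_between xy Pa, in_S_or_end_between xy Pd).
have rxd : r x d := le_lt_trans r_lin xa rad.
have ray : r a y := lt_le_trans r_lin rad dy.
pose D := [set w | le_of r d w].
have inD w : le_of r d w -> w \in D by rewrite inE.
have notinD w : le_of r w a -> w \notin D.
  by move=> wa; rewrite inE (lt_leF r_lin (le_lt_trans r_lin wa rad)).
have [P walkP] := has_cs_walk_cut r_lin rxd (in_S_or_end_cs_to_x r_lin Hvalid Pd rxd)
  inD (fun w wx => notinD w (le_trans r_lin wx xa)).
have [Q walkQ] := has_cs_walk_cut r_lin ray (in_S_or_end_cs_from_y r_lin Hvalid Pa ray)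
  (fun w yw => inD w (le_trans r_lin dy yw)) notinD.
have [dD yD] := (inD d (le_refl r d), inD y dy).
have [xD aD] := (notinD x xa, notinD a (le_refl r a)).
have [|||s walk_da] := crossing_walk_trans (cut_linear r_lin D) walkP walkQ.
- by apply: le_cut_same_side dy; rewrite dD yD.
- by rewrite /cut yD xD.
- by apply: le_cut_same_side xa; rewrite (negbTE xD) (negbTE aD).
apply: (Hfree _ _ _ (in_setT a) (in_setT d) nEad).
- exact: (crossing_edges_has_cs r_lin rab rbc rcd Eac Ebd).
- exact: (cut_walk_has_cs r_lin (upset_upclosed r_lin (d := d)) dD aD rad walk_da).
Qed.
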